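(* $|\sqrt\lambda\,\lambda_2|=1$, $(\sqrt\lambda\,\lambda_2)^k\neq1$ for every positive integer $k$, and the set $\{(\sqrt\lambda\,\lambda_2)^n:n\in\mathbb{N}\}$ is a dense subset of the unit circle in $\mathbb{C}$.
   Context: Standing setup: $p,q\in\mathbb{Z}$ are such that $x^3-px-q$ is irreducible over $\mathbb{Q}$ with exactly one real root $\theta$ (one has $3\theta^2-4p>0$). $K=\mathbb{Q}(\theta)\subset\mathbb{R}$, $\mathcal{O}_K$ its ring of integers. $\sigma_2:K\to\mathbb{C}$ is the embedding with $\sigma_2(\theta)=\frac{-\theta+i\sqrt{3\theta^2-4p}}{2}$, and $\lambda_2=\sigma_2(\lambda)$. $\lambda\in\mathcal{O}_K$ is a unit with $\lambda>1$, and $\sqrt\lambda>0$ is its positive square root. *)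

From HB Require Import structures.
From mathcomp Require Import all_boot all_order all_algebra.
From Stdlib Require Import ZArith.

Set Implicit Arguments.
Unset Strict Implicit.
Unset Printing Implicit Defensive.

Definition Z_to_int (z : Z) : int :=
  if (0 <=? z)%Z then Posz (Z.to_nat z) else (- Posz (Z.to_nat (- z)))%R.

Definition cubic_irreducible_Q (p q : Z) : Prop :=
  irreducible_poly
    (('X^3 - ((Z_to_int p)%:~R : rat)%:P * 'X - ((Z_to_int q)%:~R : rat)%:P)%R
      : {poly rat}).

From Stdlib Require Import QArith Reals Qreals.
Local Open Scope R_scope.

Definition is_alg_int (x : R) : Prop :=
  exists (n : nat) (c : nat -> Z),
    x ^ (S n) + sum_f_R0 (fun k => IZR (c k) * x ^ k) n = 0.

Definition Cpx := (R * R)%type.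
Definition Cadd (z w : Cpx) : Cpx := (fst z + fst w, snd z + snd w).
Definition Csub (z w : Cpx) : Cpx := (fst z - fst w, snd z - snd w).
Definition Cmul (z w : Cpx) : Cpx :=
  (fst z * fst w - snd z * snd w, fst z * snd w + snd z * fst w).
Definition RtoC (x : R) : Cpx := (x, 0).
Fixpoint Cpow (z : Cpx) (n : nat) : Cpx :=
  match n with O => (1, 0) | S m => Cmul z (Cpow z m) end.
Definition Cnorm (z : Cpx) : R := sqrt (fst z * fst z + snd z * snd z).

Definition theta2 (p : Z) (theta : R) : Cpx :=
  (- theta / 2, sqrt (3 * theta ^ 2 - 4 * IZR p) / 2).

Definition sigma2 (p : Z) (theta : R) (a b c : Q) : Cpx :=
  let t := theta2 p theta in
  Cadd (RtoC (Q2R a)) (Cadd (Cmul (RtoC (Q2R b)) t)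
                            (Cmul (RtoC (Q2R c)) (Cmul t t))).

From Pilot Require Import Defs.
From Stdlib Require Import ZArith QArith Reals Qreals Lra Lia Classical.
From HB Require Import structures.
From mathcomp Require all_boot all_order all_algebra ssrZ zify ring.
From Coquelicot Require Complex.

(** Write [N(x) = x |σ₂ x|²] for [x ∈ K]; it is multiplicative.  Elements
    of [K] are handled through their rational coordinates in the basis
    [1, θ, θ²], on which [N] is an integral cubic form.  If [λ] is an
    algebraic integer, the powers of [λ] span a finitely generated
    [ℤ]-module, so their coordinates have a common denominator [D] and
    [D³ N(λ)ᵐ] is a positive integer for every [m]: hence [N(λ) ≥ 1].
    Applied to [λ] and [λ⁻¹] this gives [N(λ) = 1], i.e. [w = √λ λ₂] has
    modulus [1].  If [wᵏ = 1] then [σ₂(λ²ᵏ) = λ⁻ᵏ] is real, which forces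
    [λ²ᵏ] to be rational (the imaginary part of [σ₂(a + bθ + cθ²)] is a
    nonzero multiple of [b - cθ]), hence [λ³ᵏ = 1], contradicting [λ > 1].
    Density is then Kronecker's theorem for the irrational rotation
    [w = e^{2πig}], proved with Dirichlet's pigeonhole argument. *)

Module IrreducibleCubic.
Import all_boot all_order all_algebra ssrZ zify ring.
Import GRing.Theory Num.Theory.
Local Open Scope ring_scope.

Lemma Z_to_intE z : Z_to_int z = int_of_Z z.
Proof.
case: z => [|pp|pp] //=; rewrite /Z_to_int /=.
rewrite NegzE; congr (- Posz _); change (PosDef.Pos.to_nat pp) with (Pos.to_nat pp); lia.
Qed.

(* A root [n/d] would give a linear factor of the cubic. *)
Lemma no_fraction_root (p q : Z) : cubic_irreducible_Q p q ->
  forall n d : Z, d <> Z0 ->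
  Z.sub (Z.sub (Z.mul (Z.mul n n) n) (Z.mul (Z.mul p n) (Z.mul d d)))
        (Z.mul q (Z.mul (Z.mul d d) d)) <> Z0.
Proof.
move=> Hirr n d Hd Heq.
set P := (('X^3 - ((Z_to_int p)%:~R : rat)%:P * 'X
           - ((Z_to_int q)%:~R : rat)%:P)%R : {poly rat}).
have dn0 : ((int_of_Z d)%:~R : rat) != 0.
  rewrite intr_eq0; apply/eqP => h; apply: Hd.
  by rewrite -(int_of_ZK d) h.
set x : rat := (int_of_Z n)%:~R / (int_of_Z d)%:~R.
have rootPx : root P x.
  apply/eqP.
  have : ((int_of_Z d)%:~R : rat) ^+ 3 * P.[x] = 0.
    rewrite /P !hornerE /x !Z_to_intE.
    have -> : (0 : rat) = (int_of_Z (Z.sub (Z.sub (Z.mul (Z.mul n n) n)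
      (Z.mul (Z.mul p n) (Z.mul d d))) (Z.mul q (Z.mul (Z.mul d d) d))))%:~R
      by rewrite Heq.
    rewrite !rmorphB !rmorphM /=.
    by field.
  move/eqP; rewrite mulf_eq0 expf_eq0 (negbTE dn0) andbF /= => /eqP //.
have dvdP : ('X - x%:P) %| P by rewrite dvdp_XsubCl.
have := Hirr.2 _ _ dvdP; rewrite size_XsubC => /(_ isT) /eqp_size.
rewrite size_XsubC /P -addrA size_polyDl; first by rewrite size_polyXn.
rewrite size_polyXn.
apply: (leq_ltn_trans (size_polyD _ _)).
rewrite gtn_max size_polyN size_polyN size_polyC.
apply/andP; split; last by case: (_ != 0).
by rewrite mul_polyC (leq_ltn_trans (size_scale_leq _ _)) // size_polyX.
Qed.

End IrreducibleCubic.

Local Open Scope R_scope.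

Definition is_rational (x : R) : Prop := exists r : Q, x = Q2R r.
Definition is_integer (x : R) : Prop := exists z : Z, x = IZR z.

Lemma is_rational_plus x y : is_rational x -> is_rational y -> is_rational (x + y).
Proof. intros [r ->] [s ->]. exists (r + s)%Q. now rewrite Q2R_plus. Qed.
Lemma is_rational_mult x y : is_rational x -> is_rational y -> is_rational (x * y).
Proof. intros [r ->] [s ->]. exists (r * s)%Q. now rewrite Q2R_mult. Qed.
Lemma is_rational_opp x : is_rational x -> is_rational (- x).
Proof. intros [r ->]. exists (- r)%Q. now rewrite Q2R_opp. Qed.
Lemma is_rational_minus x y : is_rational x -> is_rational y -> is_rational (x - y).
Proof. intros. apply is_rational_plus; auto. now apply is_rational_opp. Qed.
Lemma is_rational_IZR z : is_rational (IZR z).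
Proof. exists (inject_Z z). unfold Q2R; simpl. field. Qed.
Lemma is_rational_inv x : is_rational x -> x <> 0 -> is_rational (/ x).
Proof.
  intros [r ->] H. exists (/ r)%Q. rewrite Q2R_inv; auto.
  intro E. apply H. rewrite (Qeq_eqR _ _ E). unfold Q2R; simpl. field.
Qed.
Lemma is_rational_div x y : is_rational x -> is_rational y -> y <> 0 -> is_rational (x / y).
Proof. intros. apply is_rational_mult; auto. now apply is_rational_inv. Qed.

Lemma is_integer_plus x y : is_integer x -> is_integer y -> is_integer (x + y).
Proof. intros [r ->] [s ->]. exists (r + s)%Z. now rewrite plus_IZR. Qed.
Lemma is_integer_mult x y : is_integer x -> is_integer y -> is_integer (x * y).
Proof. intros [r ->] [s ->]. exists (r * s)%Z. now rewrite mult_IZR. Qed.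
Lemma is_integer_opp x : is_integer x -> is_integer (- x).
Proof. intros [r ->]. exists (- r)%Z. now rewrite opp_IZR. Qed.
Lemma is_integer_minus x y : is_integer x -> is_integer y -> is_integer (x - y).
Proof. intros. apply is_integer_plus; auto. now apply is_integer_opp. Qed.
Lemma is_integer_IZR z : is_integer (IZR z).
Proof. now exists z. Qed.

#[local] Hint Resolve is_rational_IZR is_integer_IZR : core.

Lemma is_rational_denominator x :
  is_rational x -> exists d : Z, (0 < d)%Z /\ is_integer (IZR d * x).
Proof.
  intros [r ->]. exists (Zpos (Qden r)). split; [lia|].
  exists (Qnum r). unfold Q2R. field. apply IZR_nz.
Qed.

Lemma is_integer_pos_ge1 x : is_integer x -> 0 < x -> 1 <= x.
Proof. intros [z ->] H. apply lt_0_IZR in H. apply IZR_le. lia. Qed.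

Ltac is_rational_auto :=
  repeat (apply is_rational_plus || apply is_rational_minus || apply is_rational_opp
          || apply is_rational_mult || apply is_rational_IZR); auto.
Ltac is_integer_auto :=
  repeat (apply is_integer_plus || apply is_integer_minus || apply is_integer_opp
          || apply is_integer_mult || apply is_integer_IZR); auto.

Lemma cubic_no_rational_root p q : cubic_irreducible_Q p q ->
  forall r, is_rational r -> r ^ 3 - IZR p * r - IZR q <> 0.
Proof.
  intros Hirr r [s ->] E.
  apply (IrreducibleCubic.no_fraction_root _ _ Hirr (Qnum s) (Zpos (Qden s)));
    [discriminate|].
  apply eq_IZR. rewrite !minus_IZR, !mult_IZR.
  unfold Q2R in E. set (n := IZR (Qnum s)) in *. set (d := IZR (Zpos (Qden s))) in *.
  assert (Hd : d <> 0) by apply IZR_nz.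
  replace 0 with (d * d * d * ((n * / d) ^ 3 - IZR p * (n * / d) - IZR q))
    by (rewrite E; ring).
  field. auto.
Qed.

Section CubicRoot.
Variables (p q : Z) (theta : R).
Hypothesis no_rational_root : forall r, is_rational r -> r ^ 3 - IZR p * r - IZR q <> 0.
Hypothesis theta_cube : theta ^ 3 = IZR p * theta + IZR q.

Lemma theta_irrational : ~ is_rational theta.
Proof. intro H. apply (no_rational_root theta H). lra. Qed.

Lemma rational_combination_eq0 a b c :
  is_rational a -> is_rational b -> is_rational c ->
  a + b * theta + c * theta ^ 2 = 0 -> a = 0 /\ b = 0 /\ c = 0.
Proof.
  intros Ha Hb Hc E.
  destruct (Req_dec c 0) as [->|Hc0].
  - destruct (Req_dec b 0) as [->|Hb0]; [lra|].
    exfalso. apply theta_irrational. replace theta with (- a / b) by (field_simplify_eq; lra).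
    apply is_rational_div; auto. now apply is_rational_opp.
  - exfalso.
    (* Eliminating [θ²] between [E] and the cubic leaves a linear relation. *)
    set (u := b * b - a * c - IZR p * c * c). set (v := a * b - IZR q * c * c).
    assert (K : u * theta + v = 0).
    { replace (u * theta + v) with
        (c * c * (theta ^ 3 - IZR p * theta - IZR q)
         - (c * theta - b) * (a + b * theta + c * theta ^ 2)) by (unfold u, v; ring).
      rewrite theta_cube, E. ring. }
    destruct (Req_dec u 0) as [Hu|Hu].
    + apply (no_rational_root (b / c)).
      * apply is_rational_div; auto.
      * assert (Hv : v = 0) by (rewrite Hu in K; lra).
        field_simplify_eq; auto.
        replace (b ^ 3 - b * c ^ 2 * IZR p - c ^ 3 * IZR q) with (b * u + c * v)
          by (unfold u, v; ring).
        rewrite Hu, Hv; ring.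
    + apply theta_irrational. replace theta with (- v / u) by (field_simplify_eq; lra).
      apply is_rational_div; auto; unfold u, v; is_rational_auto.
Qed.

(* If the cofactor [x² + θx + θ² - p] had real roots, both would equal [θ],
   forcing [θ = 0]. *)
Lemma unique_real_root_discr_pos :
  (forall x : R, x ^ 3 - IZR p * x - IZR q = 0 -> x = theta) ->
  0 < 3 * theta ^ 2 - 4 * IZR p.
Proof.
  intros Huniq.
  destruct (Rlt_or_le 0 (3 * theta ^ 2 - 4 * IZR p)) as [H|H]; auto.
  exfalso.
  set (r := sqrt (4 * IZR p - 3 * theta ^ 2)).
  assert (Hr : r * r = 4 * IZR p - 3 * theta ^ 2) by (apply sqrt_sqrt; lra).
  assert (root_of_factor : forall x, x * x + theta * x + theta ^ 2 - IZR p = 0 -> x = theta).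
  { intros x Hx. apply Huniq.
    replace (x ^ 3 - IZR p * x - IZR q) with
      ((x - theta) * (x * x + theta * x + theta ^ 2 - IZR p)
       + (theta ^ 3 - IZR p * theta - IZR q)) by ring.
    rewrite Hx, theta_cube. ring. }
  assert (E1 : (- theta + r) / 2 = theta) by (apply root_of_factor; nra).
  assert (E2 : (- theta - r) / 2 = theta) by (apply root_of_factor; nra).
  apply theta_irrational. replace theta with 0 by lra. apply is_rational_IZR.
Qed.

End CubicRoot.

Module ComplexRing.
Import Coquelicot.Complex.

Lemma Cmul_reduce (P Q : R) (t : Cpx) (A B C A' B' C' : R) :
  Defs.Cmul t (Defs.Cmul t t) = Defs.Cadd (Defs.Cmul (Defs.RtoC P) t) (Defs.RtoC Q) ->
  let ev a b c := Defs.Cadd (Defs.RtoC a)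
                    (Defs.Cadd (Defs.Cmul (Defs.RtoC b) t)
                               (Defs.Cmul (Defs.RtoC c) (Defs.Cmul t t))) in
  ev (A * A' + Q * (B * C' + C * B'))
     (A * B' + B * A' + P * (B * C' + C * B') + Q * C * C')
     (A * C' + B * B' + C * A' + P * C * C')
  = Defs.Cmul (ev A B C) (ev A' B' C').
Proof.
  intros H ev. unfold ev.
  change Defs.Cmul with Cmult in *. change Defs.Cadd with Cplus in *.
  change Defs.RtoC with RtoC in *.
  repeat rewrite ?RtoC_plus, ?RtoC_mult.
  set (u := Cmult t (Cmult t t)) in H.
  apply Ceq_minus.
  transitivity (Cmult (- ((B * C' + C * B') + C * C' * t))%C (u - (P * t + Q)))%C.
  - unfold u. ring.
  - rewrite H. ring.
Qed.

Lemma Cpow_mul z w n : Defs.Cpow (Defs.Cmul z w) n = Defs.Cmul (Defs.Cpow z n) (Defs.Cpow w n).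
Proof.
  induction n; simpl.
  - unfold Defs.Cmul; simpl. f_equal; ring.
  - rewrite IHn. change Defs.Cmul with Cmult.
    match goal with |- ?a = ?b => change (@eq C a b) end; ring.
Qed.

Lemma Cpow_add z m n : Defs.Cpow z (m + n) = Defs.Cmul (Defs.Cpow z m) (Defs.Cpow z n).
Proof.
  induction m; simpl.
  - unfold Defs.Cmul; simpl. destruct (Defs.Cpow z n); simpl; f_equal; ring.
  - rewrite IHm. change Defs.Cmul with Cmult.
    match goal with |- ?a = ?b => change (@eq C a b) end; ring.
Qed.

End ComplexRing.

Record kelt := KElt { k0 : R; k1 : R; k2 : R }.

Section Coordinates.
Variables P Q : R.

(* [KElt a b c] stands for [a + bθ + cθ²] with [θ³ = Pθ + Q]. *)
Definition kmul (X Y : kelt) : kelt :=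
  let (A, B, C) := X in let (A', B', C') := Y in
  KElt (A * A' + Q * (B * C' + C * B'))
       (A * B' + B * A' + P * (B * C' + C * B') + Q * C * C')
       (A * C' + B * B' + C * A' + P * C * C').
Definition kone := KElt 1 0 0.
Fixpoint kpow (X : kelt) (n : nat) : kelt :=
  match n with O => kone | S m => kmul X (kpow X m) end.
Definition kadd (X Y : kelt) := KElt (k0 X + k0 Y) (k1 X + k1 Y) (k2 X + k2 Y).
Definition kscale (r : R) (X : kelt) := KElt (r * k0 X) (r * k1 X) (r * k2 X).
Definition keval (x : R) (X : kelt) := k0 X + k1 X * x + k2 X * x ^ 2.
Definition kevalC (t : Cpx) (X : kelt) : Cpx :=
  Cadd (RtoC (k0 X)) (Cadd (Cmul (RtoC (k1 X)) t) (Cmul (RtoC (k2 X)) (Cmul t t))).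
Definition krational X := is_rational (k0 X) /\ is_rational (k1 X) /\ is_rational (k2 X).

Section RealEvaluation.
Variable x : R.
Hypothesis x_root : x ^ 3 = P * x + Q.

Lemma keval_mul X Y : keval x (kmul X Y) = keval x X * keval x Y.
Proof.
  destruct X as [A B C], Y as [A' B' C']. unfold keval, kmul; cbn [k0 k1 k2].
  replace (A * A' + Q * (B * C' + C * B') +
     (A * B' + B * A' + P * (B * C' + C * B') + Q * C * C') * x +
     (A * C' + B * B' + C * A' + P * C * C') * x ^ 2)
    with ((A + B * x + C * x ^ 2) * (A' + B' * x + C' * x ^ 2)
          - ((B * C' + C * B') + C * C' * x) * (x ^ 3 - (P * x + Q))) by ring.
  rewrite x_root. ring.
Qed.

Lemma keval_one : keval x kone = 1.
Proof. unfold keval, kone; simpl. ring. Qed.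

Lemma keval_pow X n : keval x (kpow X n) = keval x X ^ n.
Proof. induction n; simpl. apply keval_one. now rewrite keval_mul, IHn. Qed.

End RealEvaluation.

Lemma keval_add x X Y : keval x (kadd X Y) = keval x X + keval x Y.
Proof. unfold keval, kadd; simpl; ring. Qed.
Lemma keval_scale x r X : keval x (kscale r X) = r * keval x X.
Proof. unfold keval, kscale; simpl; ring. Qed.

Section ComplexEvaluation.
Variable t : Cpx.
Hypothesis t_root : Cmul t (Cmul t t) = Cadd (Cmul (RtoC P) t) (RtoC Q).

Lemma kevalC_mul X Y : kevalC t (kmul X Y) = Cmul (kevalC t X) (kevalC t Y).
Proof.
  destruct X as [A B C], Y as [A' B' C'].
  exact (ComplexRing.Cmul_reduce P Q t A B C A' B' C' t_root).
Qed.

Lemma kevalC_one : kevalC t kone = (1, 0).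
Proof. unfold kevalC, kone, Cadd, Cmul, RtoC; simpl. f_equal; ring. Qed.

Lemma kevalC_pow X n : kevalC t (kpow X n) = Cpow (kevalC t X) n.
Proof. induction n; simpl. apply kevalC_one. now rewrite kevalC_mul, IHn. Qed.

End ComplexEvaluation.

Section Rationality.
Hypotheses (P_rational : is_rational P) (Q_rational : is_rational Q).

Lemma krational_mul X Y : krational X -> krational Y -> krational (kmul X Y).
Proof.
  destruct X as [A B C], Y as [A' B' C'].
  intros (? & ? & ?) (? & ? & ?). repeat split; simpl in *; is_rational_auto.
Qed.
Lemma krational_one : krational kone.
Proof. repeat split; apply is_rational_IZR. Qed.
Lemma krational_pow X n : krational X -> krational (kpow X n).
Proof. intros. induction n; simpl. apply krational_one. now apply krational_mul. Qed.

End Rationality.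

Lemma krational_add X Y : krational X -> krational Y -> krational (kadd X Y).
Proof. intros (? & ? & ?) (? & ? & ?). repeat split; now apply is_rational_plus. Qed.
Lemma krational_scale r X : is_rational r -> krational X -> krational (kscale r X).
Proof. intros ? (? & ? & ?). repeat split; now apply is_rational_mult. Qed.

Lemma kmul_add X Y Z : kmul X (kadd Y Z) = kadd (kmul X Y) (kmul X Z).
Proof. destruct X, Y, Z. unfold kmul, kadd; simpl. f_equal; ring. Qed.
Lemma kmul_scale X r Y : kmul X (kscale r Y) = kscale r (kmul X Y).
Proof. destruct X, Y. unfold kmul, kscale; simpl. f_equal; ring. Qed.

End Coordinates.

Definition Cnorm2 (z : Cpx) := fst z * fst z + snd z * snd z.

Lemma Cnorm2_mul z w : Cnorm2 (Cmul z w) = Cnorm2 z * Cnorm2 w.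
Proof. destruct z, w. unfold Cnorm2, Cmul; simpl. ring. Qed.

Lemma Cnorm2_pow z n : Cnorm2 (Cpow z n) = Cnorm2 z ^ n.
Proof. induction n; simpl. unfold Cnorm2; simpl; ring. now rewrite Cnorm2_mul, IHn. Qed.

Lemma Cpow_RtoC r n : Cpow (RtoC r) n = RtoC (r ^ n).
Proof.
  induction n; simpl; [reflexivity|].
  rewrite IHn. unfold Cmul, RtoC; simpl. f_equal; ring.
Qed.

Lemma Cnorm2_ge0 z : 0 <= Cnorm2 z.
Proof. unfold Cnorm2. nra. Qed.

Lemma Cnorm_eq1 z : Cnorm z = 1 <-> Cnorm2 z = 1.
Proof.
  unfold Cnorm. fold (Cnorm2 z). split; intro H.
  - rewrite <- (sqrt_sqrt (Cnorm2 z)) by apply Cnorm2_ge0. rewrite H. ring.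
  - rewrite H. apply sqrt_1.
Qed.

(* The norm [N(A + Bθ + Cθ²)] expanded as the determinant of multiplication
   by [A + Bθ + Cθ²]. *)
Definition knorm_form (P Q : R) (X : kelt) : R :=
  let (A, B, C) := X in
  A * ((A + C * P) ^ 2 - B * (B * P + C * Q)) - B * (C * Q * (A + C * P) - B * B * Q)
  + C * (C * Q * (B * P + C * Q) - (A + C * P) * B * Q).

Lemma knorm_form_scale P Q d X : knorm_form P Q (kscale d X) = d ^ 3 * knorm_form P Q X.
Proof. destruct X. unfold knorm_form, kscale; simpl. ring. Qed.

Lemma knorm_form_integer p q X :
  is_integer (k0 X) -> is_integer (k1 X) -> is_integer (k2 X) ->
  is_integer (knorm_form (IZR p) (IZR q) X).
Proof.
  destruct X as [A B C]; simpl. intros. unfold knorm_form, pow. is_integer_auto.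
Qed.

Section Conjugate.
Variables (p q : Z) (theta : R).
Local Notation P := (IZR p).
Local Notation Q := (IZR q).
Local Notation s := (sqrt (3 * theta ^ 2 - 4 * P)).
Local Notation t2 := (theta2 p theta).
Hypothesis theta_cube : theta ^ 3 = P * theta + Q.
Hypothesis discr_pos : 0 < 3 * theta ^ 2 - 4 * P.

Lemma sqrt_discr_sqr : s * s = 3 * theta ^ 2 - 4 * P.
Proof. apply sqrt_sqrt. lra. Qed.

Lemma theta2_cube : Cmul t2 (Cmul t2 t2) = Cadd (Cmul (RtoC P) t2) (RtoC Q).
Proof.
  unfold theta2, Cmul, Cadd, RtoC. cbn [fst snd].
  pose proof sqrt_discr_sqr as H.
  f_equal; apply Rminus_diag_uniq.
  - transitivity ((theta ^ 3 - P * theta - Q)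
                  + 3 * theta / 8 * (s * s - (3 * theta ^ 2 - 4 * P))); [field|].
    rewrite H, theta_cube. ring.
  - transitivity (- s / 8 * (s * s - (3 * theta ^ 2 - 4 * P))); [field|].
    rewrite H. ring.
Qed.

Lemma kevalC_theta2_im X : snd (kevalC t2 X) = s / 2 * (k1 X - k2 X * theta).
Proof. destruct X. unfold kevalC, theta2, Cadd, Cmul, RtoC. simpl. field. Qed.

Definition knorm (X : kelt) := keval theta X * Cnorm2 (kevalC t2 X).

Lemma knorm_mul X Y : knorm (kmul P Q X Y) = knorm X * knorm Y.
Proof.
  unfold knorm. rewrite keval_mul, kevalC_mul, Cnorm2_mul by auto using theta2_cube.
  ring.
Qed.

Lemma knorm_one : knorm (kone) = 1.
Proof. unfold knorm. rewrite keval_one, kevalC_one. unfold Cnorm2; simpl; ring. Qed.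

Lemma knorm_pow X m : knorm (kpow P Q X m) = knorm X ^ m.
Proof. induction m; simpl. apply knorm_one. now rewrite knorm_mul, IHm. Qed.

Lemma knorm_eq_form X : knorm X = knorm_form P Q X.
Proof.
  destruct X as [A B C]. unfold knorm, keval, kevalC, Cnorm2, theta2.
  unfold Cmul, Cadd, RtoC, knorm_form. cbn [fst snd k0 k1 k2].
  pose proof sqrt_discr_sqr as H.
  apply Rminus_diag_uniq.
  transitivity ((C^3*theta^3 - C^3*P*theta - 3*A*B*C + B^3 - B*C^2*P + C^3*Q)
                 * (theta^3 - P*theta - Q)
     + (A + B*theta + C*theta^2) * (s*s - (3*theta^2 - 4*P)) *
       (- (2*A - B*theta + C*(2*P - theta^2)) * C / 4
        + C^2 * (s*s - (3*theta^2 - 4*P)) / 16 + (B - C*theta)^2 / 4)); [field|].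
  rewrite H, theta_cube. ring.
Qed.

End Conjugate.

Fixpoint ksum (f : nat -> kelt) (m : nat) : kelt :=
  match m with O => f O | S k => kadd (ksum f k) (f (S k)) end.

Lemma keval_ksum x f m : keval x (ksum f m) = sum_f_R0 (fun k => keval x (f k)) m.
Proof. induction m; simpl; auto. now rewrite keval_add, IHm. Qed.

Lemma krational_ksum f m :
  (forall k, (k <= m)%nat -> krational (f k)) -> krational (ksum f m).
Proof.
  induction m; intros H; simpl; [apply H; lia|].
  apply krational_add; [apply IHm; intros|]; apply H; lia.
Qed.

Definition clears_denominators (d : R) (X : kelt) :=
  is_integer (d * k0 X) /\ is_integer (d * k1 X) /\ is_integer (d * k2 X).

Lemma clears_denominators_multiple d e X :
  is_integer e -> clears_denominators d X -> clears_denominators (d * e) X.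
Proof.
  intros He (H0 & H1 & H2). unfold clears_denominators.
  rewrite !(Rmult_comm d e), !Rmult_assoc. repeat split; now apply is_integer_mult.
Qed.

Lemma clears_denominators_add d X Y :
  clears_denominators d X -> clears_denominators d Y -> clears_denominators d (kadd X Y).
Proof.
  intros (? & ? & ?) (? & ? & ?). unfold clears_denominators, kadd; simpl.
  rewrite !Rmult_plus_distr_l. repeat split; now apply is_integer_plus.
Qed.

Lemma clears_denominators_scale d z X :
  clears_denominators d X -> clears_denominators d (kscale (IZR z) X).
Proof.
  intros (H0 & H1 & H2). unfold clears_denominators, kscale; simpl.
  rewrite !(Rmult_comm d), !Rmult_assoc, !(Rmult_comm _ d).
  repeat split; apply is_integer_mult; auto.
Qed.

Lemma krational_clears_denominators X :
  krational X -> exists d : Z, (0 < d)%Z /\ clears_denominators (IZR d) X.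
Proof.
  intros (H0 & H1 & H2).
  destruct (is_rational_denominator _ H0) as (d0 & Hd0 & K0).
  destruct (is_rational_denominator _ H1) as (d1 & Hd1 & K1).
  destruct (is_rational_denominator _ H2) as (d2 & Hd2 & K2).
  exists (d0 * d1 * d2)%Z. split; [lia|].
  unfold clears_denominators. rewrite !mult_IZR.
  replace (IZR d0 * IZR d1 * IZR d2 * k0 X) with ((IZR d0 * k0 X) * (IZR d1 * IZR d2)) by ring.
  replace (IZR d0 * IZR d1 * IZR d2 * k1 X) with ((IZR d1 * k1 X) * (IZR d0 * IZR d2)) by ring.
  replace (IZR d0 * IZR d1 * IZR d2 * k2 X) with ((IZR d2 * k2 X) * (IZR d0 * IZR d1)) by ring.
  repeat split; apply is_integer_mult; auto; apply is_integer_mult; auto.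
Qed.

Section IntegralNorm.
Variables (p q : Z) (theta : R).
Local Notation P := (IZR p).
Local Notation Q := (IZR q).
Hypothesis no_rational_root : forall r, is_rational r -> r ^ 3 - P * r - Q <> 0.
Hypothesis theta_cube : theta ^ 3 = P * theta + Q.
Hypothesis discr_pos : 0 < 3 * theta ^ 2 - 4 * P.

Lemma keval_inj X Y : krational X -> krational Y -> keval theta X = keval theta Y -> X = Y.
Proof.
  destruct X as [A B C], Y as [A' B' C']. unfold krational, keval; simpl.
  intros (? & ? & ?) (? & ? & ?) E.
  destruct (rational_combination_eq0 p q theta no_rational_root theta_cube
              (A - A') (B - B') (C - C')) as (E0 & E1 & E2);
    try (apply is_rational_minus; auto); [lra|].
  f_equal; lra.
Qed.

Variables (L : kelt) (n : nat) (c : nat -> Z).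
Hypothesis L_rational : krational L.
Hypothesis L_integral :
  keval theta L ^ S n + sum_f_R0 (fun k => IZR (c k) * keval theta L ^ k) n = 0.

Inductive in_span : kelt -> Prop :=
| in_span_pow_le k : (k <= n)%nat -> in_span (kpow P Q L k)
| in_span_add X Y : in_span X -> in_span Y -> in_span (kadd X Y)
| in_span_scale z X : in_span X -> in_span (kscale (IZR z) X).

Lemma in_span_ksum f m : (forall k, (k <= m)%nat -> in_span (f k)) -> in_span (ksum f m).
Proof.
  induction m; intros H; simpl; [apply H; lia|].
  apply in_span_add; [apply IHm; intros|]; apply H; lia.
Qed.

Lemma kpow_succ_degree :
  kpow P Q L (S n) = ksum (fun k => kscale (IZR (- c k)) (kpow P Q L k)) n.
Proof.
  apply keval_inj.
  - now apply krational_pow.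
  - apply krational_ksum. intros. apply krational_scale; auto.
    now apply krational_pow.
  - rewrite keval_ksum, keval_pow by auto.
    rewrite (sum_eq _ (fun k => IZR (c k) * keval theta L ^ k * -1))
      by (intros; rewrite keval_scale, keval_pow, opp_IZR by auto; ring).
    rewrite <- scal_sum. lra.
Qed.

Lemma in_span_mul X : in_span X -> in_span (kmul P Q L X).
Proof.
  induction 1 as [k Hk| |].
  - change (kmul P Q L (kpow P Q L k)) with (kpow P Q L (S k)).
    destruct (Nat.eq_dec k n) as [->|Hkn].
    + rewrite kpow_succ_degree. apply in_span_ksum. intros.
      now apply in_span_scale, in_span_pow_le.
    + apply in_span_pow_le. lia.
  - rewrite kmul_add. now apply in_span_add.
  - rewrite kmul_scale. now apply in_span_scale.
Qed.

Lemma in_span_pow m : in_span (kpow P Q L m).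
Proof. induction m; [apply (in_span_pow_le 0); lia | now apply in_span_mul]. Qed.

Lemma kpow_common_denominator :
  exists D : Z, (0 < D)%Z /\ forall m, clears_denominators (IZR D) (kpow P Q L m).
Proof.
  assert (low : forall N, exists D : Z, (0 < D)%Z /\
            forall k, (k <= N)%nat -> clears_denominators (IZR D) (kpow P Q L k)).
  { intro N. induction N as [|m (D & HD & IH)].
    - destruct (krational_clears_denominators kone krational_one) as (d & Hd & Hl).
      exists d. split; auto. intros k Hk. now replace k with 0%nat by lia.
    - destruct (krational_clears_denominators (kpow P Q L (S m))) as (d & Hd & Hl).
      { now apply krational_pow. }
      exists (D * d)%Z. split; [lia|]. intros k Hk. rewrite mult_IZR.
      destruct (Nat.eq_dec k (S m)) as [->|Hne].
      + rewrite Rmult_comm. apply clears_denominators_multiple; auto.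
      + apply clears_denominators_multiple; [auto | apply IH; lia]. }
  destruct (low n) as (D & HD & Hlow). exists D. split; auto. intro m.
  induction (in_span_pow m).
  - now apply Hlow.
  - now apply clears_denominators_add.
  - now apply clears_denominators_scale.
Qed.

(* [D³ N(L)ᵐ = N(D Lᵐ)] is a positive integer for all [m]. *)
Lemma knorm_ge1 : 0 < knorm p theta L -> 1 <= knorm p theta L.
Proof.
  intro Hpos.
  destruct kpow_common_denominator as (D & HD & HL).
  assert (HDr : 0 < IZR D) by (apply IZR_lt; lia).
  assert (Hint : forall m, is_integer (IZR D ^ 3 * knorm p theta L ^ m)).
  { intro m. rewrite <- (knorm_pow p q), (knorm_eq_form p q), <- knorm_form_scale by auto.
    destruct (HL m) as (H0 & H1 & H2). now apply knorm_form_integer. }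
  destruct (Rlt_or_le (knorm p theta L) 1) as [Hlt|]; auto.
  exfalso.
  destruct (pow_lt_1_zero (knorm p theta L)) with (y := / IZR D ^ 3) as [N HN].
  - rewrite Rabs_pos_eq; lra.
  - apply Rinv_0_lt_compat, pow_lt; auto.
  - specialize (HN N (le_n _)). rewrite Rabs_pos_eq in HN by (apply pow_le; lra).
    assert (H3 : 0 < IZR D ^ 3) by (apply pow_lt; auto).
    assert (H1 := is_integer_pos_ge1 _ (Hint N)).
    assert (H2 : 0 < IZR D ^ 3 * knorm p theta L ^ N)
      by (apply Rmult_lt_0_compat; [|apply pow_lt]; auto).
    apply (Rmult_lt_compat_l (IZR D ^ 3)) in HN; auto.
    rewrite Rinv_r in HN by lra. specialize (H1 H2). lra.
Qed.

End IntegralNorm.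

Lemma pow_inv_mul_le (x : R) k n : x <> 0 -> (k <= n)%nat ->
  (/ x) ^ k * x ^ S n = x * x ^ (n - k).
Proof.
  intros Hx Hk. replace (S n) with (S (n - k) + k)%nat by lia.
  rewrite pow_add, <- Rmult_assoc, Rmult_comm, <- Rmult_assoc, <- Rpow_mult_distr.
  rewrite Rinv_r, pow1 by auto. simpl. ring.
Qed.

Section UnitNorm.
Variables (p q : Z) (theta : R).
Local Notation P := (IZR p).
Local Notation Q := (IZR q).
Hypothesis no_rational_root : forall r, is_rational r -> r ^ 3 - P * r - Q <> 0.
Hypothesis theta_cube : theta ^ 3 = P * theta + Q.
Hypothesis discr_pos : 0 < 3 * theta ^ 2 - 4 * P.
Variable T : kelt.
Hypothesis T_rational : krational T.
Local Notation lam := (keval theta T).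
Hypothesis lam_gt1 : 1 < lam.
Hypothesis lam_integral : is_alg_int lam.
Hypothesis lam_inv_integral : is_alg_int (/ lam).

(* From [λ⁻ⁿ⁻¹ + Σ cₖ λ⁻ᵏ = 0] one reads off [λ⁻¹ = -Σ cₖ λⁿ⁻ᵏ]. *)
Lemma kinv_exists : exists T', krational T' /\ keval theta T' = / lam.
Proof.
  destruct lam_inv_integral as (n & c & Hc).
  exists (ksum (fun k => kscale (IZR (- c k)) (kpow P Q T (n - k))) n). split.
  - apply krational_ksum. intros. apply krational_scale; auto.
    apply krational_pow; auto.
  - assert (Hl0 : lam <> 0) by lra.
    apply (Rmult_eq_reg_l lam); auto. rewrite Rinv_r, keval_ksum by auto.
    apply (f_equal (Rmult (lam ^ S n))) in Hc.
    rewrite Rmult_0_r, Rmult_plus_distr_l, <- Rpow_mult_distr, Rinv_r, pow1,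
      scal_sum in Hc by auto.
    rewrite scal_sum.
    rewrite (sum_eq _ (fun k => IZR (c k) * (/ lam) ^ k * lam ^ S n * -1)).
    + rewrite <- scal_sum. lra.
    + intros k Hk. rewrite keval_scale, keval_pow, opp_IZR by auto.
      rewrite (Rmult_assoc (IZR (c k))), (pow_inv_mul_le lam k n) by auto. ring.
Qed.

Lemma knorm_unit : knorm p theta T = 1.
Proof.
  destruct kinv_exists as (T' & T'_rational & HT').
  assert (Hprod : kmul P Q T T' = kone).
  { apply (keval_inj p q theta); auto.
    - apply krational_mul; auto.
    - apply krational_one.
    - rewrite keval_mul, keval_one, HT' by auto. field. lra. }
  assert (HN : knorm p theta T * knorm p theta T' = 1).
  { rewrite <- (knorm_mul p q) by auto. rewrite Hprod. apply knorm_one. }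
  assert (lam_inv_pos : 0 < keval theta T') by (rewrite HT'; apply Rinv_0_lt_compat; lra).
  assert (N_nonneg : 0 <= knorm p theta T /\ 0 <= knorm p theta T').
  { split; apply Rmult_le_pos; try apply Cnorm2_ge0; lra. }
  destruct lam_integral as (n & c & Hc).
  destruct lam_inv_integral as (n' & c' & Hc'). rewrite <- HT' in Hc'.
  pose proof (knorm_ge1 p q theta no_rational_root theta_cube discr_pos T n c T_rational Hc).
  pose proof (knorm_ge1 p q theta no_rational_root theta_cube discr_pos T' n' c' T'_rational Hc').
  nra.
Qed.

Local Notation w := (Cmul (RtoC (sqrt lam)) (kevalC (theta2 p theta) T)).

Lemma conjugate_rotation_norm : Cnorm2 w = 1.
Proof.
  rewrite Cnorm2_mul. unfold Cnorm2 at 1, RtoC; simpl.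
  rewrite Rmult_0_l, Rplus_0_r, sqrt_sqrt by lra. exact knorm_unit.
Qed.

Lemma conjugate_rotation_not_root k : (0 < k)%nat -> Cpow w k <> (1, 0).
Proof.
  intros Hk E.
  set (M := kpow P Q T (k + k)).
  assert (M_rational : krational M) by (apply krational_pow; auto).
  assert (M_val : keval theta M = lam ^ (k + k)) by (apply keval_pow; auto).
  assert (HM : Cmul (RtoC (lam ^ k)) (kevalC (theta2 p theta) M) = (1, 0)).
  { rewrite <- (sqrt_sqrt lam), Rpow_mult_distr, <- pow_add by lra.
    unfold M. rewrite kevalC_pow by (apply theta2_cube; auto).
    rewrite <- Cpow_RtoC, <- ComplexRing.Cpow_mul, ComplexRing.Cpow_add, E.
    unfold Cmul; simpl. f_equal; ring. }
  assert (lam_k : 1 < lam ^ k) by (apply Rlt_pow_R1; auto).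
  (* [σ₂(λ²ᵏ) = λ⁻ᵏ] is real, so [λ²ᵏ] is rational. *)
  assert (M_im : snd (kevalC (theta2 p theta) M) = 0).
  { apply (f_equal snd) in HM. unfold Cmul, RtoC in HM. cbn [fst snd] in HM.
    rewrite Rmult_0_l, Rplus_0_r in HM.
    destruct (Rmult_integral _ _ HM); [lra | assumption]. }
  rewrite kevalC_theta2_im in M_im.
  assert (s_pos : 0 < sqrt (3 * theta ^ 2 - 4 * P)) by (apply sqrt_lt_R0; lra).
  assert (M_k1 : k1 M = k2 M * theta)
    by (destruct (Rmult_integral _ _ M_im); lra).
  destruct M as [A B C]. destruct M_rational as (HA & HB & HC). cbn [k0 k1 k2] in *.
  destruct (rational_combination_eq0 p q theta no_rational_root theta_cube B (- C) 0)
    as (-> & HC0 & _); auto using is_rational_opp; [lra|].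
  replace C with 0 in * by lra.
  assert (HA' : A = lam ^ k * lam ^ k)
    by (rewrite <- pow_add, <- M_val; unfold keval; cbn [k0 k1 k2]; ring).
  apply (f_equal fst) in HM. unfold kevalC, Cadd, Cmul, RtoC in HM.
  cbn [fst snd k0 k1 k2] in HM. ring_simplify in HM. rewrite HA' in HM.
  nra.
Qed.

End UnitNorm.

Lemma unit_circle_polar z : Cnorm2 z = 1 -> exists a, z = (cos a, sin a).
Proof.
  destruct z as [x y]. unfold Cnorm2; simpl. intro H.
  assert (Hx : -1 <= x <= 1) by nra.
  assert (Hs : sqrt (1 - x²) = Rabs y).
  { rewrite <- sqrt_Rsqr_abs. f_equal. unfold Rsqr. lra. }
  destruct (Rle_or_lt 0 y) as [Hy|Hy].
  - exists (acos x). rewrite cos_acos, sin_acos, Hs, Rabs_pos_eq; auto.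
  - exists (- acos x). rewrite cos_neg, sin_neg, cos_acos, sin_acos, Hs, Rabs_left; auto.
    f_equal. ring.
Qed.

Lemma Cpow_polar a n : Cpow (cos a, sin a) n = (cos (INR n * a), sin (INR n * a)).
Proof.
  induction n; simpl Cpow.
  - now rewrite Rmult_0_l, cos_0, sin_0.
  - rewrite IHn, S_INR. replace ((INR n + 1) * a) with (a + INR n * a) by ring.
    rewrite cos_plus, sin_plus. unfold Cmul; simpl. f_equal; ring.
Qed.

Lemma polar_periodZ x j :
  (cos (x + 2 * IZR j * PI), sin (x + 2 * IZR j * PI)) = (cos x, sin x).
Proof.
  assert (Hnat : forall y m, (cos (y + 2 * INR m * PI), sin (y + 2 * INR m * PI)) = (cos y, sin y))
    by (intros; now rewrite cos_period, sin_period).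
  destruct (Z_le_gt_dec 0 j).
  - rewrite <- (Z2Nat.id j), <- INR_IZR_INZ by lia. apply Hnat.
  - rewrite <- (Hnat (x + 2 * IZR j * PI) (Z.to_nat (- j))).
    rewrite INR_IZR_INZ, Z2Nat.id, opp_IZR by lia. f_equal; f_equal; ring.
Qed.

Lemma sin_sqr_le x : sin x * sin x <= x * x.
Proof.
  assert (Hpos : forall y, 0 < y -> sin y * sin y <= y * y).
  { intros y Hy. destruct (Rle_or_lt 1 y) as [H1|H1].
    - pose proof (SIN_bound y). nra.
    - assert (0 <= sin y) by (apply sin_ge_0; pose proof PI2_1; lra).
      pose proof (sin_lt_x y Hy). nra. }
  destruct (Rtotal_order x 0) as [H|[->|H]].
  - rewrite <- (Ropp_involutive x), sin_neg. specialize (Hpos (- x)). nra.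
  - rewrite sin_0. lra.
  - auto.
Qed.

Lemma polar_dist_le a b : Cnorm (Csub (cos a, sin a) (cos b, sin b)) <= Rabs (a - b).
Proof.
  unfold Cnorm, Csub; simpl.
  rewrite <- sqrt_Rsqr_abs. apply sqrt_le_1_alt.
  (* The chord has squared length [2 - 2 cos (a - b) = 4 sin²((a - b)/2)]. *)
  assert (E : (cos a - cos b) * (cos a - cos b) + (sin a - sin b) * (sin a - sin b)
              = 2 - 2 * cos (a - b)).
  { rewrite cos_minus. pose proof (sin2_cos2 a). pose proof (sin2_cos2 b).
    unfold Rsqr in *. nra. }
  rewrite E. replace (a - b) with (2 * ((a - b) / 2)) at 1 by field.
  rewrite cos_2a_sin. pose proof (sin_sqr_le ((a - b) / 2)). unfold Rsqr. nra.
Qed.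

Lemma pigeonhole N (g : nat -> nat) : (forall i, (i <= N)%nat -> (g i < N)%nat) ->
  exists i i', (i < i' <= N)%nat /\ g i = g i'.
Proof.
  revert g. induction N as [|N IH]; intros g Hg.
  - specialize (Hg 0%nat (le_n 0)). lia.
  - destruct (classic (exists i, (i <= N)%nat /\ g i = g (S N))) as [(i & Hi & E)|Hno].
    + exists i, (S N). split; [lia|auto].
    + (* Redirect the value [N] to [g (S N)], which is then not taken below [S N]. *)
      set (h := fun i => if Nat.eqb (g i) N then g (S N) else g i).
      destruct (IH h) as (i & i' & Hii & E).
      * intros i Hi. unfold h. destruct (Nat.eqb_spec (g i) N) as [Ei|Ei].
        -- assert (g (S N) <> N) by (intro C; apply Hno; exists i; split; auto; lia).
           specialize (Hg (S N) (le_n _)). lia.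
        -- specialize (Hg i ltac:(lia)). lia.
      * unfold h in E.
        destruct (Nat.eqb_spec (g i) N), (Nat.eqb_spec (g i') N).
        -- exists i, i'. split; [lia|congruence].
        -- exfalso. apply Hno. exists i'. split; [lia|auto].
        -- exfalso. apply Hno. exists i. split; [lia|auto].
        -- exists i, i'. split; [lia|auto].
Qed.

Lemma Int_part_nonneg r : 0 <= r -> (0 <= Int_part r)%Z.
Proof.
  intro H. destruct (base_Int_part r) as [H1 H2].
  assert (IZR (Int_part r) > -1) by lra.
  apply lt_IZR in H0. lia.
Qed.

Lemma nat_multiple_near e y : 0 < e -> 0 <= y -> exists k : nat, INR k * e <= y < INR k * e + e.
Proof.
  intros He Hy.
  assert (Hye : 0 <= y / e) by (apply Rmult_le_pos; auto; left; apply Rinv_0_lt_compat; auto).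
  exists (Z.to_nat (Int_part (y / e))).
  rewrite INR_IZR_INZ, Z2Nat.id by (apply Int_part_nonneg; auto).
  destruct (base_Int_part (y / e)) as [H1 H2].
  set (z := IZR (Int_part (y / e))) in *.
  split.
  - apply (Rmult_le_reg_r (/ e)); [now apply Rinv_0_lt_compat|].
    replace (z * e * / e) with z by (field; lra). exact H1.
  - apply (Rmult_lt_reg_r (/ e)); [now apply Rinv_0_lt_compat|].
    replace ((z * e + e) * / e) with (z + 1) by (field; lra). unfold Rdiv in H2. lra.
Qed.

Section Kronecker.
Variable g : R.
Hypothesis g_irrational : forall m : nat, (0 < m)%nat -> forall j : Z, INR m * g <> IZR j.

Lemma dirichlet_approximation d :
  0 < d -> exists (m : nat) (j : Z), 0 < Rabs (INR m * g - IZR j) < d.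
Proof.
  intros Hd.
  destruct (archimed_cor1 d Hd) as (N & HN & HN0).
  assert (HNr : 0 < INR N) by (apply lt_0_INR; auto).
  set (frac := fun i : nat => INR i * g - IZR (Int_part (INR i * g))).
  assert (Hfrac : forall i, 0 <= frac i < 1).
  { intro i. unfold frac. destruct (base_Int_part (INR i * g)). lra. }
  set (box := fun i => Z.to_nat (Int_part (INR N * frac i))).
  assert (Hnn : forall i, (0 <= Int_part (INR N * frac i))%Z).
  { intro i. apply Int_part_nonneg. specialize (Hfrac i). nra. }
  destruct (pigeonhole N box) as (i & i' & Hii & E).
  { intros i _. unfold box. specialize (Hfrac i). specialize (Hnn i).
    destruct (base_Int_part (INR N * frac i)) as [H1 _].
    assert (INR N * frac i < INR N * 1) by (apply Rmult_lt_compat_l; lra).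
    assert (HH : IZR (Int_part (INR N * frac i)) < INR N) by lra.
    assert (Int_part (INR N * frac i) < Z.of_nat N)%Z
      by (apply lt_IZR; rewrite <- INR_IZR_INZ; exact HH).
    lia. }
  unfold box in E. apply Z2Nat.inj in E; auto.
  destruct (base_Int_part (INR N * frac i)) as [A1 A2].
  destruct (base_Int_part (INR N * frac i')) as [B1 B2].
  rewrite E in A1, A2.
  assert (Hdiff : Rabs (frac i' - frac i) < / INR N).
  { apply Rabs_def1; apply (Rmult_lt_reg_l (INR N)); auto.
    - rewrite Rinv_r by lra. lra.
    - replace (INR N * - / INR N) with (-1) by (field; lra). lra. }
  set (j := (Int_part (INR i' * g) - Int_part (INR i * g))%Z).
  exists (i' - i)%nat, j.
  assert (Em : INR (i' - i) * g - IZR j = frac i' - frac i).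
  { unfold j. rewrite minus_INR, minus_IZR by lia. unfold frac. ring. }
  rewrite Em. split; [|lra].
  apply Rabs_pos_lt. rewrite <- Em. intro C.
  apply (g_irrational (i' - i)%nat ltac:(lia) j). lra.
Qed.

Lemma kronecker t d : 0 < d -> exists (n : nat) (J : Z), Rabs (INR n * g - t - IZR J) < d.
Proof.
  intros Hd.
  destruct (dirichlet_approximation d Hd) as (m & j & He1 & He2).
  set (e := INR m * g - IZR j) in *.
  set (t0 := t - IZR (Int_part t)).
  assert (Ht0 : 0 <= t0 < 1) by (unfold t0; destruct (base_Int_part t); lra).
  destruct (Rle_or_lt 0 e) as [Hpos|Hneg].
  - rewrite Rabs_pos_eq in He1, He2 by lra.
    destruct (nat_multiple_near e t0 He1 (proj1 Ht0)) as [k Hk].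
    exists (k * m)%nat, (Z.of_nat k * j - Int_part t)%Z.
    rewrite mult_INR, minus_IZR, mult_IZR, <- INR_IZR_INZ.
    replace (INR k * INR m * g - t - (INR k * IZR j - IZR (Int_part t))) with (INR k * e - t0)
      by (unfold e, t0; ring).
    apply Rabs_def1; lra.
  - rewrite Rabs_left in He1, He2 by lra.
    destruct (nat_multiple_near (- e) (1 - t0) He1 ltac:(lra)) as [k Hk].
    exists (k * m)%nat, (Z.of_nat k * j - Int_part t - 1)%Z.
    rewrite mult_INR, !minus_IZR, mult_IZR, <- INR_IZR_INZ.
    replace (INR k * INR m * g - t - (INR k * IZR j - IZR (Int_part t) - 1))
      with (- (INR k * - e - (1 - t0))) by (unfold e, t0; ring).
    apply Rabs_def1; lra.
Qed.

End Kronecker.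

Lemma unit_circle_orbit_dense (w : Cpx) : Cnorm2 w = 1 ->
  (forall k : nat, (0 < k)%nat -> Cpow w k <> (1, 0)) ->
  forall z : Cpx, Cnorm z = 1 -> forall eps : R, 0 < eps ->
  exists n : nat, Cnorm (Csub (Cpow w n) z) < eps.
Proof.
  intros Hw not_root z Hz eps Heps.
  apply Cnorm_eq1 in Hz.
  destruct (unit_circle_polar w Hw) as [a ->].
  destruct (unit_circle_polar z Hz) as [b ->].
  pose proof PI_RGT_0.
  set (g := a / (2 * PI)).
  assert (g_irrational : forall m : nat, (0 < m)%nat -> forall j : Z, INR m * g <> IZR j).
  { intros m Hm j C. apply (not_root m Hm). rewrite Cpow_polar.
    replace (INR m * a) with (0 + 2 * IZR j * PI) by (rewrite <- C; unfold g; field; lra).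
    now rewrite polar_periodZ, cos_0, sin_0. }
  destruct (kronecker g g_irrational (b / (2 * PI)) (eps / (2 * PI))) as (n & J & HJ).
  { apply Rdiv_lt_0_compat; lra. }
  exists n. rewrite Cpow_polar, <- (polar_periodZ b J).
  eapply Rle_lt_trans; [apply polar_dist_le|].
  replace (INR n * a - (b + 2 * IZR J * PI))
    with ((2 * PI) * (INR n * g - b / (2 * PI) - IZR J)) by (unfold g; field; lra).
  rewrite Rabs_mult, Rabs_pos_eq by lra.
  apply (Rmult_lt_reg_l (/ (2 * PI))); [apply Rinv_0_lt_compat; lra|].
  rewrite <- Rmult_assoc, Rinv_l, Rmult_1_l by lra.
  replace (/ (2 * PI) * eps) with (eps / (2 * PI)) by (field; lra). exact HJ.
Qed.

Theorem mainTheorem13 (p q : Z) (theta : R)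
  (Hirr : cubic_irreducible_Q p q)
  (Hroot : theta ^ 3 - IZR p * theta - IZR q = 0)
  (Huniq : forall x : R, x ^ 3 - IZR p * x - IZR q = 0 -> x = theta)
  (lambda : R) (a b c : Q)
  (HK : lambda = Q2R a + Q2R b * theta + Q2R c * theta ^ 2)
  (Hint : is_alg_int lambda)
  (Hunit : is_alg_int (/ lambda))
  (Hgt1 : 1 < lambda) :
  let w := Cmul (RtoC (sqrt lambda)) (sigma2 p theta a b c) in
  Cnorm w = 1 /\
  (forall k : nat, (0 < k)%nat -> Cpow w k <> (1, 0)) /\
  (forall n : nat, Cnorm (Cpow w n) = 1) /\
  (forall z : Cpx, Cnorm z = 1 ->
     forall eps : R, 0 < eps ->
       exists n : nat, Cnorm (Csub (Cpow w n) z) < eps).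
Proof.
  intro w. subst w lambda.
  pose proof (cubic_no_rational_root p q Hirr) as no_root.
  assert (theta_cube : theta ^ 3 = IZR p * theta + IZR q) by lra.
  pose proof (unique_real_root_discr_pos p q theta no_root theta_cube Huniq) as discr_pos.
  set (T := KElt (Q2R a) (Q2R b) (Q2R c)).
  assert (T_rational : krational T) by (repeat split; eexists; reflexivity).
  change (Q2R a + Q2R b * theta + Q2R c * theta ^ 2) with (keval theta T) in *.
  change (sigma2 p theta a b c) with (kevalC (theta2 p theta) T).
  set (w := Cmul (RtoC (sqrt (keval theta T))) (kevalC (theta2 p theta) T)).
  assert (w_norm : Cnorm2 w = 1) by now apply (conjugate_rotation_norm p q).
  assert (w_not_root : forall k, (0 < k)%nat -> Cpow w k <> (1, 0))
    by now apply (conjugate_rotation_not_root p q).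
  repeat split.
  - now apply Cnorm_eq1.
  - exact w_not_root.
  - intro n. apply Cnorm_eq1. now rewrite Cnorm2_pow, w_norm, pow1.
  - now apply unit_circle_orbit_dense.
Qed.
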